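(* Let $A=op\langle\{F_1=w_1,\dots,F_n=w_n\}\rangle\prec N$ be an aggregate and let $G$ be the formula $$\bigwedge_{I\subseteq\{1,\dots,n\}\,:\,op(\{w_i:i\in I\})\not\prec N}\Big(\big(\bigwedge_{i\in I}F_i\big)\to\big(\bigvee_{i\in\overline I}F_i\big)\Big),\qquad \overline I=\{1,\dots,n\}\setminus I.$$ If $A$ is monotone, then $G$ is strongly equivalent to $\bigwedge_{I\subseteq\{1,\dots,n\}:op(\{w_i:i\in I\})\not\prec N}\big(\bigvee_{i\in\overline I}F_i\big)$. If $A$ is antimonotone, then $G$ is strongly equivalent to $\bigwedge_{I\subseteq\{1,\dots,n\}:op(\{w_i:i\in I\})\not\prec N}\big(\neg\bigwedge_{i\in I}F_i\big)$.
   Context: Formulas with aggregates: atoms and $\bot$; combinations by $\wedge,\vee,\to$; and aggregates $op\langle\{F_1=w_1,\dots,F_n=w_n\}\rangle\prec N$ with $op$ a function from finite multisets of reals to $\mathbb R\cup\{\pm\infty\}$, $F_i$ formulas with aggregates, $w_i,N$ reals, $\prec$ a binary relation on reals ($\not\prec$ its negation). $\top:=\bot\to\bot$, $\neg F:=F\to\bot$; empty conjunction is $\top$, empty disjunction is $\bot$. $X$ satisfies the aggregate iff $op(W_X)\prec N$, $W_X$ the multiset of $w_i$ with $X\models F_i$. Reduct: $\bot^X=\bot$; $a^X=a$ if $a\in X$, else $\bot$; $(F\otimes G)^X=F^X\otimes G^X$ if $X\models F\otimes G$, else $\bot$; for an aggregate $A$, $A^X$ is $op\langle\{F_1^X=w_1,\dots,F_n^X=w_n\}\rangle\prec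 N$ if $X\models A$ and $\bot$ otherwise. $X$ is a stable model of a theory $\Gamma$ if $X\models\Gamma^X$ and no proper subset of $X$ satisfies $\Gamma^X$; two formulas are strongly equivalent if adding either of them to any theory yields the same stable models. The aggregate is monotone if for all sub-multisets $W_1\subseteq W_2\subseteq\{w_1,\dots,w_n\}$, $op(W_1)\prec N$ implies $op(W_2)\prec N$; antimonotone if for all $W_2\subseteq W_1\subseteq\{w_1,\dots,w_n\}$, $op(W_1)\prec N$ implies $op(W_2)\prec N$. *)

From Stdlib Require Import Reals List Bool ClassicalEpsilon.
Import ListNotations.
Open Scope R_scope.
Set Implicit Arguments.

Inductive ExtR : Type := Fin (r : R) | PInf | NInf.

(* A (finite) multiset of reals is given by its multiplicity function. *)
Definition mset := R -> nat.

Definition submset (W1 W2 : mset) : Prop := forall r, (W1 r <= W2 r)%nat.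

(* multiset {w_i : b_i = true} for a weight list ws and a characteristic
   vector b of an index subset *)
Fixpoint mset_of (ws : list R) (b : list bool) (r : R) : nat :=
  match ws, b with
  | w :: ws', c :: b' =>
      ((if c && (if Req_EM_T w r then true else false) then 1 else 0)
       + mset_of ws' b' r)%nat
  | _, _ => 0%nat
  end.

Definition mset_full (ws : list R) : mset := mset_of ws (repeat true (length ws)).

Section Formulas.
Variable Atom : Type.

(* Formulas with aggregates.  Agg op prec [(F_1,w_1);...;(F_n,w_n)] N  is
   op<{F_1=w_1,...,F_n=w_n}> prec N. *)
Inductive formula : Type :=
| FAtom (a : Atom)
| FBot
| FAnd (F G : formula)
| FOr (F G : formula)
| FImp (F G : formula)
| Agg (op : mset -> ExtR) (prec : ExtR -> R -> Prop)
      (args : list (formula * R)) (N : R).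

Definition FTop : formula := FImp FBot FBot.
Definition FNeg (F : formula) : formula := FImp F FBot.

Definition interp := Atom -> Prop.

(* satisfaction; for an aggregate, b is the characteristic vector of
   {i | X |= F_i}, so W_X = mset_of (weights) b *)
Fixpoint sat (X : interp) (F : formula) : Prop :=
  match F with
  | FAtom a => X a
  | FBot => False
  | FAnd F G => sat X F /\ sat X G
  | FOr F G => sat X F \/ sat X G
  | FImp F G => sat X F -> sat X G
  | Agg op prec args N =>
      exists b : list bool,
        (fix satl (l : list (formula * R)) (b : list bool) : Prop :=
           match l, b with
           | [], [] => True
           | (G, _) :: t, c :: b' => (c = true <-> sat X G) /\ satl t b'
           | _, _ => False
           end) args b
        /\ prec (op (mset_of (map snd args) b)) N
  end.

Definition dec (P : Prop) : {P} + {~ P} := excluded_middle_informative P.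

Fixpoint reduct (X : interp) (F : formula) : formula :=
  match F with
  | FAtom a => if dec (X a) then FAtom a else FBot
  | FBot => FBot
  | FAnd G H => if dec (sat X F) then FAnd (reduct X G) (reduct X H) else FBot
  | FOr G H => if dec (sat X F) then FOr (reduct X G) (reduct X H) else FBot
  | FImp G H => if dec (sat X F) then FImp (reduct X G) (reduct X H) else FBot
  | Agg op prec args N =>
      if dec (sat X F) then
        Agg op prec
          ((fix rl (l : list (formula * R)) : list (formula * R) :=
              match l with
              | [] => []
              | (G, w) :: t => (reduct X G, w) :: rl t
              end) args) N
      else FBot
  end.

Definition theory := formula -> Prop.

Definition stable_model (X : interp) (T : theory) : Prop :=
  (forall F, T F -> sat X (reduct X F)) /\
  forall Y : interp,
    (forall a, Y a -> X a) -> (exists a, X a /\ ~ Y a) ->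
    ~ (forall F, T F -> sat Y (reduct X F)).

Definition add_formula (T : theory) (F : formula) : theory :=
  fun H => T H \/ H = F.

Definition strongly_equivalent (F G : formula) : Prop :=
  forall (T : theory) (X : interp),
    stable_model X (add_formula T F) <-> stable_model X (add_formula T G).

Fixpoint bigAnd (l : list formula) : formula :=
  match l with
  | [] => FTop
  | [F] => F
  | F :: t => FAnd F (bigAnd t)
  end.

Fixpoint bigOr (l : list formula) : formula :=
  match l with
  | [] => FBot
  | [F] => F
  | F :: t => FOr F (bigOr t)
  end.

Fixpoint select (l : list formula) (I : list bool) : list formula :=
  match l, I with
  | F :: t, c :: I' => if c then F :: select t I' else select t I'
  | _, _ => []
  end.

Fixpoint subsets (n : nat) : list (list bool) :=
  match n with
  | O => [[]]
  | S m => map (cons true) (subsets m) ++ map (cons false) (subsets m)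
  end.

Definition conj_over_failing (op : mset -> ExtR) (prec : ExtR -> R -> Prop)
  (args : list (formula * R)) (N : R) (body : list bool -> formula) : formula :=
  bigAnd (flat_map (fun I =>
            if dec (~ prec (op (mset_of (map snd args) I)) N) then [body I] else [])
          (subsets (length args))).

Definition Fs (args : list (formula * R)) := map fst args.

Definition G_formula op prec args N : formula :=
  conj_over_failing op prec args N (fun I =>
    FImp (bigAnd (select (Fs args) I)) (bigOr (select (Fs args) (map negb I)))).

Definition G_mono op prec args N : formula :=
  conj_over_failing op prec args N (fun I => bigOr (select (Fs args) (map negb I))).

Definition G_anti op prec args N : formula :=
  conj_over_failing op prec args N (fun I => FNeg (bigAnd (select (Fs args) I))).

End Formulas.

Arguments FBot {Atom}.

Definition agg_monotone (op : mset -> ExtR) (prec : ExtR -> R -> Prop)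
  (ws : list R) (N : R) : Prop :=
  forall W1 W2 : mset, submset W1 W2 -> submset W2 (mset_full ws) ->
    prec (op W1) N -> prec (op W2) N.

Definition agg_antimonotone (op : mset -> ExtR) (prec : ExtR -> R -> Prop)
  (ws : list R) (N : R) : Prop :=
  forall W1 W2 : mset, submset W2 W1 -> submset W1 (mset_full ws) ->
    prec (op W1) N -> prec (op W2) N.

From Stdlib Require Import Reals List Arith Lia Bool.
Local Open Scope nat_scope.

(* Two formulas are strongly equivalent as soon as their reducts
   are satisfied by the same interpretations, for every reference
   interpretation X.  Under the reduct w.r.t. X, the conjunction G splits into
   one clause per failing index set I, and each clause speaks about the two
   predicates "X |= F_i" and "Y |= F_i^X" on indices.  What remains is
   combinatorics on index sets:
   - if A is monotone, the failing sets are closed under subsets, and applying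
     the clause of G to  J = I ∩ {i | Y |= F_i^X}  shows that some F_i with
     i outside I holds, i.e. the disjunctive clause of G_mono;
   - if A is antimonotone, the failing sets are closed under supersets, and
     applying the clause of G to  J = I ∪ {i | X |= F_i}  shows that X cannot
     satisfy all F_i with i in I, i.e. the negated clause of G_anti. *)

(* Satisfaction of a reduct w.r.t. X implies satisfaction by X itself:
   a reduct of a formula false in X is ⊥. *)
Lemma reduct_sat_sound {A} (X Y : interp A) (F : formula A) :
  sat Y (reduct X F) -> sat X F.
Proof.
  destruct F; simpl; try (destruct (dec _); simpl); tauto.
Qed.

Lemma reduct_and {A} (X Y : interp A) (F G : formula A) :
  sat Y (reduct X (FAnd F G)) <-> sat Y (reduct X F) /\ sat Y (reduct X G).
Proof.
  simpl; destruct (dec _) as [HX|HX]; simpl; [tauto|].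
  split; [tauto|]; intros [HF HG].
  apply HX; split; eapply reduct_sat_sound; eassumption.
Qed.

Lemma reduct_or {A} (X Y : interp A) (F G : formula A) :
  sat Y (reduct X (FOr F G)) <-> sat Y (reduct X F) \/ sat Y (reduct X G).
Proof.
  simpl; destruct (dec _) as [HX|HX]; simpl; [tauto|].
  split; [tauto|]; intros [HF|HG]; apply HX;
    [left | right]; eapply reduct_sat_sound; eassumption.
Qed.

Lemma reduct_imp {A} (X Y : interp A) (F G : formula A) :
  sat Y (reduct X (FImp F G)) <->
  (sat X F -> sat X G) /\ (sat Y (reduct X F) -> sat Y (reduct X G)).
Proof.
  simpl; destruct (dec _); simpl; tauto.
Qed.

Lemma reduct_neg {A} (X Y : interp A) (F : formula A) :
  sat Y (reduct X (FNeg F)) <-> ~ sat X F.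
Proof.
  unfold FNeg; rewrite reduct_imp; split; [tauto|].
  intro HnX; split; [exact HnX|].
  intro HY; exfalso; exact (HnX (reduct_sat_sound X Y F HY)).
Qed.

Lemma bigAnd_spec {A} (s : formula A -> Prop) :
  s (FTop A) -> (forall F G, s (FAnd F G) <-> s F /\ s G) ->
  forall l, s (bigAnd l) <-> Forall s l.
Proof.
  intros Htop Hand l; induction l as [|F [|G l] IH].
  - split; auto.
  - simpl bigAnd; rewrite Forall_cons_iff; split; [auto | tauto].
  - change (bigAnd (F :: G :: l)) with (FAnd F (bigAnd (G :: l))).
    rewrite Hand, IH, (Forall_cons_iff s F); tauto.
Qed.

Lemma bigOr_spec {A} (s : formula A -> Prop) :
  ~ s FBot -> (forall F G, s (FOr F G) <-> s F \/ s G) ->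
  forall l, s (bigOr l) <-> Exists s l.
Proof.
  intros Hbot Hor l; induction l as [|F [|G l] IH].
  - split; [tauto | intro H; inversion H].
  - simpl bigOr; rewrite Exists_cons; split; [auto|].
    intros [H|H]; [exact H | inversion H].
  - change (bigOr (F :: G :: l)) with (FOr F (bigOr (G :: l))).
    rewrite Hor, IH, (Exists_cons s F); tauto.
Qed.

Lemma sat_bigAnd {A} (X : interp A) l : sat X (bigAnd l) <-> Forall (sat X) l.
Proof. apply (bigAnd_spec (sat X)); simpl; tauto. Qed.

Lemma sat_bigOr {A} (X : interp A) l : sat X (bigOr l) <-> Exists (sat X) l.
Proof. apply (bigOr_spec (sat X)); simpl; tauto. Qed.

Lemma reduct_bigAnd {A} (X Y : interp A) l :
  sat Y (reduct X (bigAnd l)) <-> Forall (fun F => sat Y (reduct X F)) l.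
Proof.
  apply (bigAnd_spec (fun F => sat Y (reduct X F))); [| intros; apply reduct_and].
  simpl; destruct (dec _) as [_|HX]; simpl; [tauto | apply HX; tauto].
Qed.

Lemma reduct_bigOr {A} (X Y : interp A) l :
  sat Y (reduct X (bigOr l)) <-> Exists (fun F => sat Y (reduct X F)) l.
Proof.
  apply (bigOr_spec (fun F => sat Y (reduct X F)));
    [simpl; tauto | intros; apply reduct_or].
Qed.

Definition covers (n : nat) (p : nat -> Prop) (I : list bool) : Prop :=
  forall i, i < n -> nth i I false = true -> p i.

Definition hits_outside (n : nat) (p : nat -> Prop) (I : list bool) : Prop :=
  exists i, i < n /\ nth i I false = false /\ p i.

Definition incl_idx (J I : list bool) : Prop :=
  forall i, nth i J false = true -> nth i I false = true.

Lemma In_select {A} (fs : list (formula A)) I F :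
  In F (select fs I) <->
  exists i, i < length fs /\ nth i I false = true /\ nth i fs FBot = F.
Proof.
  revert I; induction fs as [|G fs IH]; intros [|c I]; simpl.
  - split; [tauto | intros [i [Hi _]]; lia].
  - split; [tauto | intros [i [Hi _]]; lia].
  - split; [tauto | intros [[|i] [_ [Hc _]]]; discriminate].
  - destruct c; simpl; rewrite ?IH; split.
    + intros [<- | [i Hi]]; [exists 0 | exists (S i)]; simpl; intuition lia.
    + intros [[|i] [Hi [Hc HF]]]; [left; exact HF | right; exists i; intuition lia].
    + intros [i Hi]; exists (S i); simpl; intuition lia.
    + intros [[|i] [Hi [Hc HF]]]; [discriminate | exists i; intuition lia].
Qed.

Lemma Forall_select {A} (P : formula A -> Prop) fs I :
  Forall P (select fs I) <-> covers (length fs) (fun i => P (nth i fs FBot)) I.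
Proof.
  rewrite Forall_forall; split.
  - intros H i Hi HI; apply H, In_select; eauto.
  - intros H F HF; apply In_select in HF as [i [Hi [HI <-]]]; auto.
Qed.

Lemma Exists_select_compl {A} (P : formula A -> Prop) fs I :
  length I = length fs ->
  Exists P (select fs (map negb I)) <->
  hits_outside (length fs) (fun i => P (nth i fs FBot)) I.
Proof.
  intro Hlen.
  assert (Hneg : forall i, i < length fs -> nth i (map negb I) false = negb (nth i I false)).
  { intros i Hi; rewrite (nth_indep _ false (negb false)) by (rewrite length_map; lia).
    apply map_nth. }
  rewrite Exists_exists; split.
  - intros [F [HF HP]]; apply In_select in HF as [i [Hi [HI <-]]].
    rewrite Hneg in HI by exact Hi; exists i; rewrite <- (negb_involutive (nth i I false)), HI.
    auto.
  - intros [i [Hi [HI HP]]]; exists (nth i fs FBot); split; [|exact HP].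
    apply In_select; exists i; rewrite Hneg, HI by exact Hi; auto.
Qed.

Lemma In_subsets n I : In I (subsets n) <-> length I = n.
Proof.
  revert I; induction n as [|n IH]; intros [|c I]; simpl;
    rewrite ?in_app_iff, ?in_map_iff.
  - intuition.
  - split; [intros [H|[]]; discriminate | discriminate].
  - split; [intros [[J [H _]]|[J [H _]]]; discriminate | discriminate].
  - split.
    + intros [[J [HJ HI]]|[J [HJ HI]]]; injection HJ as <- <-; f_equal; apply IH, HI.
    + intros Hlen; injection Hlen as Hlen; apply IH in Hlen.
      destruct c; [left | right]; exists I; auto.
Qed.

Definition failing (op : mset -> ExtR) (prec : ExtR -> R -> Prop) (ws : list R) (N : R)
  (I : list bool) : Prop :=
  ~ prec (op (mset_of ws I)) N.

Lemma reduct_conj_over_failing {A} (X Y : interp A) op prec args N body :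
  sat Y (reduct X (conj_over_failing op prec args N body)) <->
  forall I, length I = length args -> failing op prec (map snd args) N I ->
    sat Y (reduct X (body I)).
Proof.
  unfold conj_over_failing; rewrite reduct_bigAnd, Forall_forall; split.
  - intros H I Hlen Hfail; apply H, in_flat_map; exists I.
    rewrite In_subsets; destruct (dec _); [simpl; auto | contradiction].
  - intros H F HF; apply in_flat_map in HF as [I [HI HF]]; apply In_subsets in HI.
    destruct (dec _) as [Hfail|]; [destruct HF as [<- | []] | destruct HF].
    exact (H I HI Hfail).
Qed.

(* Formulas whose reducts have the same models for every X are strongly
   equivalent: stable models only look at reducts. *)
Lemma reduct_equiv_strongly_equivalent {A} (F1 F2 : formula A) :
  (forall X Y : interp A, sat Y (reduct X F1) <-> sat Y (reduct X F2)) ->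
  strongly_equivalent F1 F2.
Proof.
  intros Hequiv T X; unfold stable_model, add_formula.
  assert (Htheory : forall Y (G H : formula A),
    (sat Y (reduct X G) <-> sat Y (reduct X H)) ->
    (forall F, T F \/ F = G -> sat Y (reduct X F)) <->
    (forall F, T F \/ F = H -> sat Y (reduct X F))).
  { intros Y G H HGH; split; intros Hall F [HF | ->];
      (apply Hall; now left) || (apply HGH, Hall; now right). }
  rewrite (Htheory X F1 F2 (Hequiv X X)).
  split; intros [Hmod Hmin]; split; auto; intros Y HYX Hproper;
    [rewrite <- (Htheory Y F1 F2 (Hequiv X Y)) | rewrite (Htheory Y F1 F2 (Hequiv X Y))];
    auto.
Qed.

Lemma mset_of_mono (ws : list R) (I J : list bool) :
  length I = length ws -> length J = length ws -> incl_idx J I ->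
  submset (mset_of ws J) (mset_of ws I).
Proof.
  revert I J; induction ws as [|w ws IH]; intros [|c I] [|d J] HI HJ Hincl r;
    simpl in *; try lia.
  assert (Htail : (mset_of ws J r <= mset_of ws I r)%nat).
  { apply IH; try lia; intro i; exact (Hincl (S i)). }
  specialize (Hincl 0); simpl in Hincl.
  destruct d, c; simpl; try lia; discriminate (Hincl eq_refl).
Qed.

Lemma mset_of_full (ws : list R) (I : list bool) :
  length I = length ws -> submset (mset_of ws I) (mset_full ws).
Proof.
  intro Hlen; apply mset_of_mono; auto using repeat_length.
  intros i Hi; rewrite nth_repeat_lt; [reflexivity|].
  destruct (lt_dec i (length I)) as [Hlt|Hge]; [lia|].
  rewrite nth_overflow in Hi by lia; discriminate.
Qed.

Lemma monotone_failing_down op prec ws N I J :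
  agg_monotone op prec ws N ->
  length I = length ws -> length J = length ws -> incl_idx J I ->
  failing op prec ws N I -> failing op prec ws N J.
Proof.
  intros Hmono HI HJ Hincl HfailI HprecJ; apply HfailI.
  exact (Hmono _ _ (mset_of_mono ws I J HI HJ Hincl) (mset_of_full ws I HI) HprecJ).
Qed.

Lemma antimonotone_failing_up op prec ws N I J :
  agg_antimonotone op prec ws N ->
  length I = length ws -> length J = length ws -> incl_idx I J ->
  failing op prec ws N I -> failing op prec ws N J.
Proof.
  intros Hanti HI HJ Hincl HfailI HprecJ; apply HfailI.
  exact (Hanti _ _ (mset_of_mono ws J I HJ HI Hincl) (mset_of_full ws J HJ) HprecJ).
Qed.

Definition charvec (n : nat) (f : nat -> bool) : list bool := map f (seq 0 n).

Lemma length_charvec n f : length (charvec n f) = n.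
Proof. unfold charvec; rewrite length_map, length_seq; reflexivity. Qed.

Lemma nth_charvec n f i : nth i (charvec n f) false = if lt_dec i n then f i else false.
Proof.
  unfold charvec; destruct (lt_dec i n) as [Hi|Hi].
  - rewrite (nth_indep _ false (f 0)) by (rewrite length_map, length_seq; exact Hi).
    rewrite map_nth, seq_nth; auto.
  - apply nth_overflow; rewrite length_map, length_seq; lia.
Qed.

Definition decide (P : Prop) : bool := if dec P then true else false.

Lemma decide_spec P : decide P = true <-> P.
Proof. unfold decide; destruct (dec P); split; auto; discriminate. Qed.

Section IndexCombinatorics.
(* [fail] is a family of index sets of size n, and the "clause" hypothesis
   says: every failing J covered by p is hit by p outside J.  This is what
   the clauses of G express, for p the truth of F_i in X or in the reduct. *)
Variable n : nat.
Variable fail : list bool -> Prop.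
Variable p : nat -> Prop.
Hypothesis clause :
  forall J, length J = n -> fail J -> covers n p J -> hits_outside n p J.

(* Subset-closed failing family: restrict I to its p-part. *)
Lemma hits_outside_of_down_closed :
  (forall I J, length I = n -> length J = n -> incl_idx J I -> fail I -> fail J) ->
  forall I, length I = n -> fail I -> hits_outside n p I.
Proof.
  intros Hdown I HI Hfail.
  set (J := charvec n (fun i => nth i I false && decide (p i))).
  assert (HJ : forall i, i < n -> nth i J false = nth i I false && decide (p i))
    by (intros i Hi; unfold J; rewrite nth_charvec; destruct (lt_dec i n); [auto | lia]).
  destruct (clause J) as [i [Hi [HJi Hpi]]].
  - apply length_charvec.
  - apply (Hdown I); [exact HI | apply length_charvec | | exact Hfail].
    intro i; unfold J; rewrite nth_charvec; destruct (lt_dec i n);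
      [now destruct (nth i I false) | discriminate].
  - intros i Hi HJi; rewrite HJ in HJi by exact Hi.
    apply andb_prop in HJi as [_ Hp]; now apply decide_spec.
  - exists i; split; [exact Hi | split; [| exact Hpi]].
    rewrite HJ in HJi by exact Hi; apply decide_spec in Hpi; rewrite Hpi in HJi.
    now rewrite andb_true_r in HJi.
Qed.

(* Superset-closed failing family: enlarge I by the p-part; then no failing
   set can be covered by p. *)
Lemma not_covers_of_up_closed :
  (forall I J, length I = n -> length J = n -> incl_idx I J -> fail I -> fail J) ->
  forall I, length I = n -> fail I -> ~ covers n p I.
Proof.
  intros Hup I HI Hfail Hcov.
  set (J := charvec n (fun i => nth i I false || decide (p i))).
  assert (HJ : forall i, i < n -> nth i J false = nth i I false || decide (p i))
    by (intros i Hi; unfold J; rewrite nth_charvec; destruct (lt_dec i n); [auto | lia]).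
  destruct (clause J) as [i [Hi [HJi Hpi]]].
  - apply length_charvec.
  - apply (Hup I); [exact HI | apply length_charvec | | exact Hfail].
    intros i HIi; destruct (lt_dec i n) as [Hi|Hi].
    + rewrite HJ, HIi by exact Hi; reflexivity.
    + rewrite nth_overflow in HIi by lia; discriminate.
  - intros i Hi HJi; rewrite HJ in HJi by exact Hi.
    apply orb_prop in HJi as [HIi | Hp]; [exact (Hcov i Hi HIi) | now apply decide_spec].
  - rewrite HJ in HJi by exact Hi; apply decide_spec in Hpi; rewrite Hpi in HJi.
    rewrite orb_true_r in HJi; discriminate.
Qed.

End IndexCombinatorics.

Section Clauses.
Variables (A : Type) (X Y : interp A) (fs : list (formula A)).

Definition true_in_X (i : nat) : Prop := sat X (nth i fs FBot).
Definition true_in_reduct (i : nat) : Prop := sat Y (reduct X (nth i fs FBot)).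

Lemma reduct_G_clause I :
  length I = length fs ->
  sat Y (reduct X (FImp (bigAnd (select fs I)) (bigOr (select fs (map negb I))))) <->
  (covers (length fs) true_in_X I -> hits_outside (length fs) true_in_X I) /\
  (covers (length fs) true_in_reduct I -> hits_outside (length fs) true_in_reduct I).
Proof.
  intro Hlen.
  rewrite reduct_imp, sat_bigAnd, sat_bigOr, reduct_bigAnd, reduct_bigOr,
    !Forall_select, !Exists_select_compl by exact Hlen.
  reflexivity.
Qed.

Lemma reduct_mono_clause I :
  length I = length fs ->
  sat Y (reduct X (bigOr (select fs (map negb I)))) <->
  hits_outside (length fs) true_in_reduct I.
Proof. intro Hlen; rewrite reduct_bigOr, Exists_select_compl by exact Hlen; reflexivity. Qed.

Lemma reduct_anti_clause I :
  sat Y (reduct X (FNeg (bigAnd (select fs I)))) <-> ~ covers (length fs) true_in_X I.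
Proof. rewrite reduct_neg, sat_bigAnd, Forall_select; reflexivity. Qed.

End Clauses.

Theorem proposition13 (Atom : Type) (op : mset -> ExtR) (prec : ExtR -> R -> Prop)
  (args : list (formula Atom * R)) (N : R) :
  (agg_monotone op prec (map snd args) N ->
     strongly_equivalent (G_formula op prec args N) (G_mono op prec args N)) /\
  (agg_antimonotone op prec (map snd args) N ->
     strongly_equivalent (G_formula op prec args N) (G_anti op prec args N)).
Proof.
  assert (HFs : length (Fs args) = length args) by apply length_map.
  assert (Hws : length (map snd args) = length args) by apply length_map.
  split; intro Hagg; apply reduct_equiv_strongly_equivalent; intros X Y;
    unfold G_formula, G_mono, G_anti; rewrite !reduct_conj_over_failing; split.
  - (* G => G_mono: the reduct parts of G's clauses, failing sets closed downwards *)
    intros HG I HI Hfail; apply reduct_mono_clause; [congruence|]; rewrite HFs.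
    apply (hits_outside_of_down_closed _ (failing op prec (map snd args) N));
      [intros J HJ HfJ | intros I' J'; rewrite <- Hws; apply monotone_failing_down, Hagg
      | exact HI | exact Hfail].
    specialize (HG J HJ HfJ); apply reduct_G_clause in HG as [_ HGJ]; [|congruence].
    rewrite HFs in HGJ; exact HGJ.
  - (* G_mono => G: a disjunct true in the reduct is true in X *)
    intros Hmono I HI Hfail; specialize (Hmono I HI Hfail).
    apply reduct_mono_clause in Hmono; [|congruence].
    apply reduct_G_clause; [congruence|]; split; intros _; [|exact Hmono].
    destruct Hmono as [i [Hi [HIi Hp]]]; exists i; split; [|split]; auto.
    exact (reduct_sat_sound _ _ _ Hp).
  - (* G => G_anti: the X parts of G's clauses, failing sets closed upwards *)
    intros HG I HI Hfail; apply reduct_anti_clause; rewrite HFs.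
    apply (not_covers_of_up_closed _ (failing op prec (map snd args) N));
      [intros J HJ HfJ | intros I' J'; rewrite <- Hws; apply antimonotone_failing_up, Hagg
      | exact HI | exact Hfail].
    specialize (HG J HJ HfJ); apply reduct_G_clause in HG as [HGJ _]; [|congruence].
    rewrite HFs in HGJ; exact HGJ.
  - (* G_anti => G: both parts of G's clause hold vacuously *)
    intros Hanti I HI Hfail; specialize (Hanti I HI Hfail).
    apply reduct_anti_clause in Hanti.
    apply reduct_G_clause; [congruence|]; split; intro Hcov; exfalso; apply Hanti;
      [exact Hcov | intros i Hi HIi; exact (reduct_sat_sound _ _ _ (Hcov i Hi HIi))].
Qed.
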